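(* Let $\Gamma$ be a $g\mathbf{PAI}$-theory. For all formulas $\varphi,\psi$: $[N(\varphi)]_{\sim_\Gamma}\le_\oplus[N(\psi)]_{\sim_\Gamma}$ in the quotient algebra $\langle N[Fm]/{\sim_\Gamma},\oplus\rangle$ if and only if $N(\varphi)\le_\Gamma N(\psi)$ (equivalently, iff $\varphi\prec\psi\in\Gamma$).
   Context: Language: fix a countable set $Var$ of variables; $Fm$ is the set of formulas built from $Var$ with unary $\neg,\Box$ and binary $\vee,\to$. Abbreviations: $\varphi\wedge\psi:=\neg(\neg\varphi\vee\neg\psi)$, $\varphi\supset\psi:=\neg\varphi\vee\psi$, $\varphi\equiv\psi:=(\varphi\supset\psi)\wedge(\psi\supset\varphi)$, $\varphi\prec\psi:=\psi\to(\varphi\vee\neg\varphi)$. $g\mathbf{PAI}$ is the Hilbert calculus with axiom schemes (A1) $\varphi\supset(\psi\supset\varphi)$; (A2) $(\varphi\supset(\psi\supset\chi))\supset((\varphi\supset\psi)\supset(\varphi\supset\chi))$; (A3) $(\neg\varphi\supset\neg\psi)\supset(\psi\supset\varphi)$; (A4) $(\varphi\to\psi)\equiv(\Box(\varphi\supset\psi)\wedge(\psi\prec\varphi))$; (A5) $((\varphi\to\psi)\prec(\varphi\vee\psi))\wedge((\varphi\vee\psi)\prec(\varphi\to\psi))$; (K) $\Box(\varphi\supset\psi)\supset(\Box\varphi\supset\Box\psi)$; (T) $\Box\varphi\supset\varphi$; (4) $\Box\varphi\supset\Box\Box\varphi$; (O1) $\varphi\prec\varphi$; (O2) $((\varphi\prec\psi)\wedge(\psi\prec\chi))\supset(\varphi\prec\chi)$;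 (O3) $(\varphi\prec\psi)\supset((\varphi\vee\psi)\prec\psi)$; (O4) $((\varphi\prec\psi)\equiv(\varphi\prec\neg\psi))\wedge((\varphi\prec\psi)\equiv(\neg\varphi\prec\psi))$; (O5) $((\varphi\prec\psi)\equiv(\varphi\prec\Box\psi))\wedge((\varphi\prec\psi)\equiv(\Box\varphi\prec\psi))$; (C1) $(\varphi\prec(\varphi\vee\psi))\wedge(\psi\prec(\varphi\vee\psi))$; (C2) $((\varphi\prec\chi)\wedge(\psi\prec\chi))\supset((\varphi\vee\psi)\prec\chi)$; (C3) $((\varphi\prec\chi)\wedge(\chi\prec\varphi)\wedge(\psi\prec\zeta)\wedge(\zeta\prec\psi))\supset((\varphi\to\psi)\prec(\chi\to\zeta))$; rules (MP) from $\varphi,\varphi\supset\psi$ infer $\psi$, (Nec$_g$) from $\varphi$ infer $\Box\varphi$. A $g\mathbf{PAI}$-theory is a set of formulas closed under derivability in this calculus. $N$ is the map from $Fm$ onto the algebra of terms over $Var$ in a binary symbol $\oplus$ given by $N(p)=p$, $N(\neg\varphi)=N(\Box\varphi)=N(\varphi)$, $N(\varphi\vee\psi)=N(\varphi\to\psi)=N(\varphi)\oplus N(\psi)$; $N[Fm]$ is its image. For a theory $\Gamma$ define on $N[Fm]$: $N(\varphi)\le_\Gamma N(\psi)$ iff $\varphi\prec\psi\in\Gamma$ (independent of the chosen preimages), and $N(\varphi)\sim_\Gamma N(\psi)$ iff $N(\varphi)\le_\Gamma N(\psi)$ and $N(\psi)\le_\Gamma N(\varphi)$; $\sim_\Gamma$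 is a congruence of $\langle N[Fm],\oplus\rangle$ and $\langle N[Fm]/{\sim_\Gamma},\oplus\rangle$ is the quotient. On the quotient, $x\le_\oplus y$ iff $x\oplus y=y$. *)

From Stdlib Require Import Classical FunctionalExtensionality PropExtensionality.

Definition Var := nat.

Inductive Fm : Type :=
| FVar : Var -> Fm
| FNeg : Fm -> Fm
| FBox : Fm -> Fm
| FOr  : Fm -> Fm -> Fm
| FArr : Fm -> Fm -> Fm.   (* the binary connective "->" of the language *)

Definition FAnd (a b : Fm) : Fm := FNeg (FOr (FNeg a) (FNeg b)).
Definition FImp (a b : Fm) : Fm := FOr (FNeg a) b.
Definition FEqv (a b : Fm) : Fm := FAnd (FImp a b) (FImp b a).
Definition FPrec (a b : Fm) : Fm := FArr b (FOr a (FNeg a)).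

Inductive IsAxiom : Fm -> Prop :=
| A1 a b : IsAxiom (FImp a (FImp b a))
| A2 a b c : IsAxiom (FImp (FImp a (FImp b c)) (FImp (FImp a b) (FImp a c)))
| A3 a b : IsAxiom (FImp (FImp (FNeg a) (FNeg b)) (FImp b a))
| A4 a b : IsAxiom (FEqv (FArr a b) (FAnd (FBox (FImp a b)) (FPrec b a)))
| A5 a b : IsAxiom (FAnd (FPrec (FArr a b) (FOr a b)) (FPrec (FOr a b) (FArr a b)))
| AK a b : IsAxiom (FImp (FBox (FImp a b)) (FImp (FBox a) (FBox b)))
| AT a : IsAxiom (FImp (FBox a) a)
| A4' a : IsAxiom (FImp (FBox a) (FBox (FBox a)))
| O1 a : IsAxiom (FPrec a a)
| O2 a b c : IsAxiom (FImp (FAnd (FPrec a b) (FPrec b c)) (FPrec a c))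
| O3 a b : IsAxiom (FImp (FPrec a b) (FPrec (FOr a b) b))
| O4 a b : IsAxiom (FAnd (FEqv (FPrec a b) (FPrec a (FNeg b)))
                       (FEqv (FPrec a b) (FPrec (FNeg a) b)))
| O5 a b : IsAxiom (FAnd (FEqv (FPrec a b) (FPrec a (FBox b)))
                       (FEqv (FPrec a b) (FPrec (FBox a) b)))
| C1 a b : IsAxiom (FAnd (FPrec a (FOr a b)) (FPrec b (FOr a b)))
| C2 a b c : IsAxiom (FImp (FAnd (FPrec a c) (FPrec b c)) (FPrec (FOr a b) c))
| C3 a b c d : IsAxiom (FImp (FAnd (FAnd (FAnd (FPrec a c) (FPrec c a)) (FPrec b d)) (FPrec d b))
                           (FPrec (FArr a b) (FArr c d))).

Inductive derivable (G : Fm -> Prop) : Fm -> Prop :=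
| d_ax a : IsAxiom a -> derivable G a
| d_prem a : G a -> derivable G a
| d_mp a b : derivable G a -> derivable G (FImp a b) -> derivable G b
| d_nec a : derivable G a -> derivable G (FBox a).

Definition theory (G : Fm -> Prop) : Prop :=
  forall a, derivable G a -> G a.

Inductive Term : Type :=
| TVar : Var -> Term
| TOplus : Term -> Term -> Term.

Fixpoint N (a : Fm) : Term :=
  match a with
  | FVar p => TVar p
  | FNeg a => N a
  | FBox a => N a
  | FOr a b => TOplus (N a) (N b)
  | FArr a b => TOplus (N a) (N b)
  end.

Definition inNFm (t : Term) : Prop := exists a, N a = t.

(* t ≤_Γ s on N[Fm]: via (some) preimages; the paper shows the choice of
   preimages is irrelevant. *)
Definition leG (G : Fm -> Prop) (t s : Term) : Prop :=
  exists a b, N a = t /\ N b = s /\ G (FPrec a b).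

Definition simG (G : Fm -> Prop) (t s : Term) : Prop := leG G t s /\ leG G s t.

Definition cls (G : Fm -> Prop) (t : Term) : Term -> Prop :=
  fun s => inNFm s /\ simG G s t.

(* The operation ⊕ of the quotient: [t] ⊕ [s] := [t ⊕ s]
   (well defined since ~Γ is a congruence). *)
Definition qoplus (G : Fm -> Prop) (t s : Term) : Term -> Prop := cls G (TOplus t s).

Definition qle (G : Fm -> Prop) (t s : Term) : Prop := qoplus G t s = cls G s.

(* In a theory G, the relation [a ≺ b ∈ G] is a preorder (O1, O2) for which
   negation and box are transparent (O4, O5), [->] is equivalent to [∨] (A5)
   and [∨] is a least upper bound (C1, C2).  Hence every formula is
   ≺-equivalent to the formula read back from its term [N a], so [≤_G] only
   depends on the terms, [~_G]-classes of terms are classes of ≺-equivalent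
   formulas, and [N φ ⊕ N ψ ~_G N ψ] says that [φ ∨ ψ] and [ψ] are
   ≺-equivalent, i.e. that [φ ≺ ψ]. *)

From Stdlib Require Import FunctionalExtensionality PropExtensionality.

(* Global necessitation breaks the deduction theorem for gPAI itself, so the
   propositional reasoning is done in the A1-A3 fragment over premises. *)
Inductive hilbert (H : Fm -> Prop) : Fm -> Prop :=
| hilbert_A1 a b : hilbert H (FImp a (FImp b a))
| hilbert_A2 a b c :
    hilbert H (FImp (FImp a (FImp b c)) (FImp (FImp a b) (FImp a c)))
| hilbert_A3 a b : hilbert H (FImp (FImp (FNeg a) (FNeg b)) (FImp b a))
| hilbert_prem a : H a -> hilbert H a
| hilbert_mp a b : hilbert H a -> hilbert H (FImp a b) -> hilbert H b.

Definition extend (H : Fm -> Prop) (a : Fm) : Fm -> Prop := fun x => H x \/ x = a.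

Section Hilbert.
Variable H : Fm -> Prop.

Lemma hilbert_imp_refl a : hilbert H (FImp a a).
Proof.
  eapply hilbert_mp; [apply (hilbert_A1 H a a)|].
  eapply hilbert_mp; [apply (hilbert_A1 H a (FImp a a))|].
  apply hilbert_A2.
Qed.

Lemma hilbert_weaken a b : hilbert H b -> hilbert (extend H a) b.
Proof.
  intro D; induction D; eauto using hilbert.
  apply hilbert_prem; left; assumption.
Qed.

Lemma hilbert_extend_last a : hilbert (extend H a) a.
Proof. apply hilbert_prem; right; reflexivity. Qed.

End Hilbert.

Lemma hilbert_deduction H a b : hilbert (extend H a) b -> hilbert H (FImp a b).
Proof.
  intro D; induction D as [| | |x [Hx|Ex]|x y _ IHx _ IHxy].
  - eapply hilbert_mp; [apply hilbert_A1|apply hilbert_A1].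
  - eapply hilbert_mp; [apply hilbert_A2|apply hilbert_A1].
  - eapply hilbert_mp; [apply hilbert_A3|apply hilbert_A1].
  - eapply hilbert_mp; [apply hilbert_prem; exact Hx|apply hilbert_A1].
  - rewrite Ex; apply hilbert_imp_refl.
  - eapply hilbert_mp; [exact IHx|].
    eapply hilbert_mp; [exact IHxy|apply hilbert_A2].
Qed.

Section HilbertTheorems.
Variable H : Fm -> Prop.

Lemma hilbert_imp_trans a b c :
  hilbert H (FImp a b) -> hilbert H (FImp b c) -> hilbert H (FImp a c).
Proof.
  intros Dab Dbc; apply hilbert_deduction.
  eapply hilbert_mp; [|apply hilbert_weaken, Dbc].
  eapply hilbert_mp; [apply hilbert_extend_last|apply hilbert_weaken, Dab].
Qed.

Lemma hilbert_dneg_elim a : hilbert H (FImp (FNeg (FNeg a)) a).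
Proof.
  apply hilbert_deduction.
  eapply hilbert_mp; [apply hilbert_extend_last|].
  eapply hilbert_mp; [|apply (hilbert_A3 _ a (FNeg (FNeg a)))].
  eapply hilbert_mp; [|apply (hilbert_A3 _ (FNeg (FNeg (FNeg a))) (FNeg a))].
  eapply hilbert_mp; [apply hilbert_extend_last|apply hilbert_A1].
Qed.

Lemma hilbert_dneg_intro a : hilbert H (FImp a (FNeg (FNeg a))).
Proof. eapply hilbert_mp; [apply hilbert_dneg_elim|apply hilbert_A3]. Qed.

Lemma hilbert_contra a b :
  hilbert H (FImp a b) -> hilbert H (FImp (FNeg b) (FNeg a)).
Proof.
  intro D; eapply hilbert_mp; [|apply (hilbert_A3 _ (FNeg a) (FNeg b))].
  eapply hilbert_imp_trans; [apply hilbert_dneg_elim|].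
  eapply hilbert_imp_trans; [exact D|apply hilbert_dneg_intro].
Qed.

Lemma hilbert_neg_imp a b : hilbert H (FImp (FNeg a) (FImp a b)).
Proof.
  apply hilbert_deduction.
  eapply hilbert_mp; [|apply hilbert_A3].
  eapply hilbert_mp; [apply hilbert_extend_last|apply hilbert_A1].
Qed.

Lemma hilbert_andE1 a b : hilbert H (FAnd a b) -> hilbert H a.
Proof.
  intro D; eapply hilbert_mp; [exact D|].
  eapply hilbert_imp_trans; [|apply hilbert_dneg_elim].
  apply hilbert_contra, (hilbert_neg_imp a (FNeg b)).
Qed.

Lemma hilbert_andE2 a b : hilbert H (FAnd a b) -> hilbert H b.
Proof.
  intro D; eapply hilbert_mp; [exact D|].
  eapply hilbert_imp_trans; [|apply hilbert_dneg_elim].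
  apply hilbert_contra, (hilbert_A1 H (FNeg b) a).
Qed.

Lemma hilbert_andI a b : hilbert H a -> hilbert H b -> hilbert H (FAnd a b).
Proof.
  intros Da Db.
  assert (modus_ponens :
            hilbert H (FImp a (FImp (FImp a (FNeg b)) (FNeg b)))).
  { apply hilbert_deduction, hilbert_deduction.
    eapply hilbert_mp; [apply hilbert_weaken, hilbert_extend_last|].
    apply hilbert_extend_last. }
  eapply hilbert_mp; [|apply hilbert_contra, (hilbert_mp _ _ _ Da modus_ponens)].
  eapply hilbert_mp; [exact Db|apply hilbert_dneg_intro].
Qed.

End HilbertTheorems.

Section Theory.
Variable G : Fm -> Prop.
Hypothesis HG : theory G.

Lemma theory_hilbert_closed a : hilbert G a -> G a.
Proof.
  intro D; induction D; apply HG; eauto using derivable, IsAxiom.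
Qed.

Lemma theory_axiom a : IsAxiom a -> G a.
Proof. intro; apply HG, d_ax; assumption. Qed.

Lemma theory_mp a b : G a -> G (FImp a b) -> G b.
Proof. intros; apply theory_hilbert_closed; eauto using hilbert. Qed.

Lemma theory_andI a b : G a -> G b -> G (FAnd a b).
Proof. intros; apply theory_hilbert_closed, hilbert_andI; apply hilbert_prem; assumption. Qed.

Lemma theory_andE1 a b : G (FAnd a b) -> G a.
Proof. intro; apply theory_hilbert_closed; eauto using hilbert_andE1, hilbert. Qed.

Lemma theory_andE2 a b : G (FAnd a b) -> G b.
Proof. intro; apply theory_hilbert_closed; eauto using hilbert_andE2, hilbert. Qed.

Lemma theory_eqv a b : G (FEqv a b) -> (G a <-> G b).
Proof.
  intro E; split; intro; eapply theory_mp; eauto.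
  - exact (theory_andE1 _ _ E).
  - exact (theory_andE2 _ _ E).
Qed.

Definition prec (a b : Fm) : Prop := G (FPrec a b).

Lemma prec_refl a : prec a a.
Proof. apply theory_axiom, O1. Qed.

Lemma prec_trans a b c : prec a b -> prec b c -> prec a c.
Proof.
  intros; apply (theory_mp (FAnd (FPrec a b) (FPrec b c))).
  - apply theory_andI; assumption.
  - apply theory_axiom, O2.
Qed.

Lemma prec_negr a b : prec a (FNeg b) <-> prec a b.
Proof. symmetry; apply theory_eqv; eapply theory_andE1, theory_axiom, O4. Qed.

Lemma prec_negl a b : prec (FNeg a) b <-> prec a b.
Proof. symmetry; apply theory_eqv; eapply theory_andE2, theory_axiom, O4. Qed.

Lemma prec_boxr a b : prec a (FBox b) <-> prec a b.
Proof. symmetry; apply theory_eqv; eapply theory_andE1, theory_axiom, O5. Qed.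

Lemma prec_boxl a b : prec (FBox a) b <-> prec a b.
Proof. symmetry; apply theory_eqv; eapply theory_andE2, theory_axiom, O5. Qed.

Lemma prec_orl a b : prec a (FOr a b).
Proof. eapply theory_andE1, theory_axiom, C1. Qed.

Lemma prec_orr a b : prec b (FOr a b).
Proof. eapply theory_andE2, theory_axiom, C1. Qed.

Lemma prec_or_lub a b c : prec a c -> prec b c -> prec (FOr a b) c.
Proof.
  intros; apply (theory_mp (FAnd (FPrec a c) (FPrec b c))).
  - apply theory_andI; assumption.
  - apply theory_axiom, C2.
Qed.

Lemma prec_arr_or a b : prec (FArr a b) (FOr a b).
Proof. eapply theory_andE1, theory_axiom, A5. Qed.

Lemma prec_or_arr a b : prec (FOr a b) (FArr a b).
Proof. eapply theory_andE2, theory_axiom, A5. Qed.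

Lemma prec_or_mono a b c d : prec a c -> prec b d -> prec (FOr a b) (FOr c d).
Proof.
  intros; apply prec_or_lub; eapply prec_trans; eauto using prec_orl, prec_orr.
Qed.

Lemma prec_or_absorb a b : prec (FOr a b) b <-> prec a b.
Proof.
  split; intro.
  - eapply prec_trans; [apply prec_orl|eassumption].
  - apply prec_or_lub; auto using prec_refl.
Qed.

Fixpoint fm_of_term (t : Term) : Fm :=
  match t with
  | TVar p => FVar p
  | TOplus s u => FOr (fm_of_term s) (fm_of_term u)
  end.

Lemma prec_fm_of_N a : prec a (fm_of_term (N a)) /\ prec (fm_of_term (N a)) a.
Proof.
  induction a as [p|a [] |a [] |a [] b [] |a [] b []]; simpl.
  - split; apply prec_refl.
  - rewrite prec_negl, prec_negr; auto.
  - rewrite prec_boxl, prec_boxr; auto.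
  - split; apply prec_or_mono; assumption.
  - split.
    + eapply prec_trans; [apply prec_arr_or|apply prec_or_mono; assumption].
    + eapply prec_trans; [|apply prec_or_arr]; apply prec_or_mono; assumption.
Qed.

Lemma prec_of_N_eq a b : N a = N b -> prec a b.
Proof.
  intro E; eapply prec_trans; [apply (prec_fm_of_N a)|].
  rewrite E; apply (prec_fm_of_N b).
Qed.

Lemma leG_N a b : leG G (N a) (N b) <-> prec a b.
Proof.
  split.
  - intros (a' & b' & Ea & Eb & Hab).
    eapply prec_trans; [apply prec_of_N_eq; symmetry; exact Ea|].
    eapply prec_trans; [exact Hab|apply prec_of_N_eq; exact Eb].
  - intro; exists a, b; auto.
Qed.

Lemma simG_N a b : simG G (N a) (N b) <-> prec a b /\ prec b a.
Proof. unfold simG; rewrite !leG_N; reflexivity. Qed.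

Lemma cls_N_eq a b : cls G (N a) = cls G (N b) <-> simG G (N a) (N b).
Proof.
  split.
  - intro E.
    assert (self : cls G (N a) (N a)).
    { split; [exists a; reflexivity|]; apply simG_N; auto using prec_refl. }
    rewrite E in self; apply self.
  - rewrite simG_N; intros [ab ba].
    apply functional_extensionality; intro s.
    apply propositional_extensionality.
    unfold cls; split; intros [[c <-] Hc]; split; try (exists c; reflexivity);
      rewrite simG_N in Hc |- *; destruct Hc; split; eapply prec_trans; eauto.
Qed.

End Theory.

Theorem mainTheorem12 (G : Fm -> Prop) (HG : theory G) (phi psi : Fm) :
  qle G (N phi) (N psi) <-> G (FPrec phi psi).
Proof.
  unfold qle, qoplus.
  change (TOplus (N phi) (N psi)) with (N (FOr phi psi)).
  rewrite cls_N_eq, simG_N, prec_or_absorb by exact HG.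
  split; [intros []; assumption|].
  split; [assumption|apply prec_orr, HG].
Qed.
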